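(* Let $q$ be a prime power with $q\equiv 3\pmod 4$ and $q=2m+1$. Let $a,b\in D_1^2$ with $ab=1$, and let $M=\begin{pmatrix}1&a\\ b&1\end{pmatrix}$. Then the $2\times 2$ block matrix whose $(i,j)$ block is $C_{M_{ij}}$ (that is, $\begin{pmatrix}C_1&C_a\\ C_b&C_1\end{pmatrix}$) is the adjacency matrix of a directed strongly regular graph with parameters $(2(2m+1),\ 2m,\ m,\ m-1,\ m)$.
   Context: Fix a primitive element $\gamma$ of $\mathbb{F}_q$; $D_i^e=\gamma^i\langle\gamma^e\rangle$ ($e\mid q-1$) are the cyclotomic classes, here with $e=2$ ($D_1^2$ = quadratic nonresidues). For $\sigma\in\mathbb{F}_q^*$, $C_\sigma$ is the $q\times q$ $0$-$1$ matrix with rows and columns indexed by $\mathbb{F}_q$ and $(C_\sigma)_{x,y}=1$ iff $x\in\sigma y+D_0^e$. A directed strongly regular graph with parameters $(v,k,t,\lambda,\mu)$ is a digraph (no loops, no multiple arcs) on $v$ vertices whose adjacency matrix $A$ satisfies $A^2=tI+\lambda A+\mu(J-I-A)$ and $AJ=JA=kJ$. *)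

From HB Require Import structures.
From mathcomp Require Import all_boot all_order all_algebra all_field.
Set Implicit Arguments. Unset Strict Implicit. Unset Printing Implicit Defensive.
Import Order.TTheory GRing.Theory Num.Theory.
Local Open Scope ring_scope.

(* Cyclotomic class D_i^e = gamma^i <gamma^e> in F_q^*.  The subgroup
   <gamma^e> = { gamma^(e k) : k in N }; since gamma has order q-1, the
   exponents k < q already give all of it. *)
Definition cycl_class (F : finFieldType) (gamma : F) (i e : nat) : {set F} :=
  [set x | [exists k : 'I_#|F|, x == gamma ^+ (i + e * k)]].

(* C_sigma: rows/columns indexed by F (via the enumeration 'I_#|F| ~ F),
   (C_sigma)_{x,y} = 1 iff x \in sigma*y + D_0^e, i.e. x - sigma*y \in D_0^e. *)
Definition Cmat (F : finFieldType) (gamma : F) (e : nat) (sigma : F)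
  : 'M[int]_#|F| :=
  \matrix_(i, j) (enum_val i - sigma * enum_val j \in cycl_class gamma 0 e)%:R.

(* Directed strongly regular graph with parameters (v,k,t,lambda,mu):
   A is the adjacency matrix of a digraph without loops or multiple arcs
   (0-1 matrix with zero diagonal) on v vertices with
   A^2 = tI + lambda A + mu (J - I - A) and AJ = JA = kJ. *)
Definition is_dsrg (n : nat) (A : 'M[int]_n) (v k t lam mu : nat) : Prop :=
  let J := const_mx 1 : 'M[int]_n in
  [/\ n = v,
      forall i j, A i j = 0 \/ A i j = 1,
      forall i, A i i = 0,
      A *m A = t%:R%:M + lam%:R *: A + mu%:R *: (J - 1%:M - A)
    & A *m J = k%:R *: J /\ J *m A = k%:R *: J].

From HB Require Import structures.
From mathcomp Require Import all_boot all_order all_algebra all_field.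
From mathcomp Require Import ring zify.
Import GRing.Theory.
Local Open Scope ring_scope.

Set Implicit Arguments. Unset Strict Implicit.

(* Let Q = D_0^2 be the set of nonzero squares of F_q, q = 2m + 1, so |Q| = m.
   The (x, y) entry of C_s C_t counts the z with x - s z and z - t y in Q;
   putting w = x - s z it counts the w in Q with s^-1 (d - w) in Q, where
   d = x - s t y.  If s^-1 is a nonsquare, then for each w <> d exactly one of
   d - w and s^-1 (d - w) is a square, so whenever s t' = t the matrix
   C_1 C_t + C_s C_t' has entries |Q \ {d}| = m - [x - t y in Q], i.e. it is
   m J - C_t.  Blockwise this gives A^2 = m J - A, which is the required
   identity for t = mu = m and lambda = m - 1; the row and column sums of
   every C_s are |Q| = m. *)

Lemma block_mx_entry_prop (R : Type) m1 m2 n1 n2 (P : R -> Prop)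
    (Aul : 'M[R]_(m1, n1)) (Aur : 'M_(m1, n2))
    (Adl : 'M_(m2, n1)) (Adr : 'M_(m2, n2)) :
  (forall i j, P (Aul i j)) -> (forall i j, P (Aur i j)) ->
  (forall i j, P (Adl i j)) -> (forall i j, P (Adr i j)) ->
  forall i j, P (block_mx Aul Aur Adl Adr i j).
Proof.
move=> Pul Pur Pdl Pdr i j; rewrite -(splitK i) -(splitK j).
by case: (split i) => k; case: (split j) => l;
  rewrite ?block_mxEul ?block_mxEur ?block_mxEdl ?block_mxEdr.
Qed.

Lemma block_mx_diag_prop (R : Type) n1 n2 (P : R -> Prop)
    (Aul : 'M[R]_n1) (Aur : 'M_(n1, n2)) (Adl : 'M_(n2, n1)) (Adr : 'M_n2) :
  (forall i, P (Aul i i)) -> (forall i, P (Adr i i)) ->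
  forall i, P (block_mx Aul Aur Adl Adr i i).
Proof.
move=> Pul Pdr i; rewrite -(splitK i).
by case: (split i) => k; rewrite ?block_mxEul ?block_mxEdr.
Qed.

Lemma is_dsrg_of_sqr (n v k m : nat) (A : 'M[int]_n) :
  (0 < m)%N -> n = v ->
  (forall i j, A i j = 0 \/ A i j = 1) -> (forall i, A i i = 0) ->
  A *m A = const_mx m%:R - A ->
  A *m const_mx 1 = const_mx k%:R :> 'M_n ->
  const_mx 1 *m A = const_mx k%:R :> 'M_n ->
  is_dsrg A v k m m.-1 m.
Proof.
move=> m_gt0 nv A01 A0 sqrA rowA colA.
split=> //; last by rewrite scalemx_const mulr1.
rewrite sqrA; apply/matrixP => i j; rewrite !mxE.
have -> : (m.-1)%:R = m%:R - 1 :> int.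
  by rewrite -{2}(prednK m_gt0) -addn1 natrD addrK.
ring.
Qed.

Section CyclotomicMatrices.

Variables (F : finFieldType) (gamma : F).

Local Notation Q := (cycl_class gamma 0 2).

Lemma Cmat_entry01 e s i j :
  Cmat gamma e s i j = 0 \/ Cmat gamma e s i j = 1.
Proof. by rewrite mxE; case: (_ \in _); [right | left]. Qed.

Lemma Cmat_mul_entry s t i j :
  s != 0 ->
  (Cmat gamma 2 s *m Cmat gamma 2 t) i j =
  \sum_(w : F) (((w \in Q)%:R : int) *
     (s^-1 * (enum_val i - s * t * enum_val j - w) \in Q)%:R).
Proof.
move=> s_neq0; rewrite mxE.
under eq_bigr do rewrite !mxE.
rewrite -(big_enum_val (fun y => ((enum_val i - s * y \in Q)%:R : int) *
                                  (y - t * enum_val j \in Q)%:R)).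
have inj_z : injective (fun w : F => s^-1 * (enum_val i - w)).
  by move=> w1 w2 /(mulfI (invr_neq0 s_neq0)) /addrI /oppr_inj.
rewrite (reindex_inj inj_z); apply: eq_bigr => w _ /=.
have -> : enum_val i - s * (s^-1 * (enum_val i - w)) = w by field.
have -> : s^-1 * (enum_val i - w) - t * enum_val j =
          s^-1 * (enum_val i - s * t * enum_val j - w) by field.
by [].
Qed.

Hypothesis gamma_prim : (#|F|.-1).-primitive_root gamma.

Lemma cycl_class_neq0 i e c : c \in cycl_class gamma i e -> c != 0.
Proof.
have gamma_neq0 : gamma != 0.
  by rewrite (prim_root_eq0 gamma_prim) -lt0n (prim_order_gt0 gamma_prim).
by rewrite inE => /existsP [k /eqP ->]; rewrite expf_neq0.
Qed.

Lemma zero_notin_cycl_class i e : 0 \notin cycl_class gamma i e.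
Proof. by apply/negP => /cycl_class_neq0; rewrite eqxx. Qed.

Lemma Cmat1_diag e i : Cmat gamma e 1 i i = 0.
Proof. by rewrite mxE mul1r subrr (negbTE (zero_notin_cycl_class _ _)). Qed.

Lemma unit_prim_expr t : t != 0 -> exists j : nat, t = gamma ^+ j.
Proof.
move=> t_neq0.
have t_unity : t ^+ #|F|.-1 = 1.
  apply: (mulfI t_neq0); rewrite mulr1 -exprS prednK ?expf_card //.
  exact: ltnW (finNzRing_gt1 F).
by case: (prim_rootP gamma_prim t_unity) => j ->; exists j.
Qed.

Lemma gamma_nonsq : gamma \in cycl_class gamma 1 2.
Proof.
rewrite inE; apply/existsP; exists (Ordinal (ltnW (finNzRing_gt1 F))).
by rewrite muln0 addn0 expr1.
Qed.

Hypothesis F_odd : odd #|F|.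

Lemma prim_expr_in_sq j : (gamma ^+ j \in Q) = ~~ odd j.
Proof.
have even_order : ~~ odd #|F|.-1.
  by move: F_odd; rewrite -(prednK (ltnW (finNzRing_gt1 F))).
have order_gt0 := prim_order_gt0 gamma_prim.
have odd_mod i : odd (i %% #|F|.-1) = odd i.
  by rewrite odd_mod // (negbTE even_order).
rewrite inE; apply/existsP/idP => [[k /eqP eq_jk] | j_even].
  have := eq_prim_root_expr gamma_prim j (0 + 2 * k).
  rewrite -eq_jk eqxx => /esym /eqP; rewrite -odd_mod => ->.
  by rewrite odd_mod oddM.
have half_lt : ((j %% #|F|.-1)./2 < #|F|)%N.
  by rewrite ltn_half_double -addnn; have := ltn_pmod j order_gt0; lia.
exists (Ordinal half_lt); rewrite /= add0n mul2n even_halfK ?odd_mod //.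
by rewrite prim_expr_mod.
Qed.

Lemma nonsq_mul_sq c t :
  c \in cycl_class gamma 1 2 -> t != 0 -> (c * t \in Q) = (t \notin Q).
Proof.
rewrite inE => /existsP [k /eqP ->] /unit_prim_expr [j ->].
rewrite -exprD !prim_expr_in_sq !oddD /=; by case: (odd k); case: (odd j).
Qed.

Variable m : nat.
Hypothesis card_F : #|F| = (2 * m + 1)%N.

(* Pairing t with gamma * t: exactly one of the two is a square when t <> 0. *)
Lemma sum_sq_indicator : \sum_(t : F) ((t \in Q)%:R : int) = m%:R.
Proof.
have sum_pairs : \sum_(t : F) (((t \in Q)%:R : int) + (gamma * t \in Q)%:R)
                   = (#|F|.-1)%:R.
  rewrite (bigD1 0) //= mulr0 (negbTE (zero_notin_cycl_class _ _)) add0r.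
  rewrite (eq_bigr (fun _ => 1)) ?sumr_const ?cardC1 // => t t_neq0.
  by rewrite nonsq_mul_sq ?gamma_nonsq //; case: (_ \in _).
have sum_scaled : \sum_(t : F) ((gamma * t \in Q)%:R : int) =
                  \sum_(t : F) ((t \in Q)%:R : int).
  by rewrite [RHS](reindex_inj (mulfI (cycl_class_neq0 gamma_nonsq))).
move: sum_pairs; rewrite big_split /= sum_scaled card_F addn1 /=.
set X := \sum_(t : F) _ => sum_pairs.
have : X + X = m%:R + m%:R by rewrite sum_pairs -natrD addnn -mul2n.
lia.
Qed.

Lemma sum_sq_indicator_affine u v :
  u != 0 -> \sum_(y : F) ((u * y + v \in Q)%:R : int) = m%:R.
Proof.
move=> u_neq0; have inj_affine : injective (fun y => u * y + v).
  by move=> y1 y2 /addIr /(mulfI u_neq0).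
by rewrite -sum_sq_indicator [RHS](reindex_inj inj_affine).
Qed.

Lemma sq_pair_count c d :
  c \in cycl_class gamma 1 2 ->
  \sum_(w : F) (((w \in Q)%:R : int) * (d - w \in Q)%:R) +
  \sum_(w : F) (((w \in Q)%:R : int) * (c * (d - w) \in Q)%:R)
  = m%:R - (d \in Q)%:R.
Proof.
move=> c_nonsq.
rewrite -big_split /= -sum_sq_indicator (bigD1 d) //= [in RHS](bigD1 d) //=.
rewrite subrr mulr0 (negbTE (zero_notin_cycl_class _ _)) !mulr0 !add0r.
rewrite addrAC subrr add0r; apply: eq_bigr => w w_neq_d.
rewrite -mulrDr nonsq_mul_sq ?subr_eq0 1?eq_sym //.
by case: (d - w \in _); rewrite ?addr0 ?add0r mulr1.
Qed.

Lemma Cmat_mul_addE s t t' :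
  s^-1 \in cycl_class gamma 1 2 -> s * t' = t ->
  Cmat gamma 2 1 *m Cmat gamma 2 t + Cmat gamma 2 s *m Cmat gamma 2 t'
  = const_mx m%:R - Cmat gamma 2 t.
Proof.
move=> s_inv_nonsq st'; have s_neq0 : s != 0.
  by rewrite -invr_eq0 (cycl_class_neq0 s_inv_nonsq).
apply/matrixP => i j.
rewrite [LHS]mxE !Cmat_mul_entry ?oner_neq0 // invr1 st' !mxE.
under eq_bigr do rewrite !mul1r.
exact: sq_pair_count.
Qed.

Lemma Cmat_mul_const1 n s :
  s != 0 -> Cmat gamma 2 s *m (const_mx 1 : 'M_(#|F|, n)) = const_mx m%:R.
Proof.
move=> s_neq0; apply/matrixP => i j; rewrite !mxE.
under eq_bigr do rewrite !mxE mulr1.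
rewrite -(big_enum_val (fun y => ((enum_val i - s * y \in Q)%:R : int))).
rewrite -(@sum_sq_indicator_affine (- s) (enum_val i)) ?oppr_eq0 //.
by apply: eq_bigr => y _; rewrite mulNr addrC.
Qed.

Lemma const1_mul_Cmat n s :
  (const_mx 1 : 'M_(n, #|F|)) *m Cmat gamma 2 s = const_mx m%:R.
Proof.
apply/matrixP => i j; rewrite !mxE.
under eq_bigr do rewrite !mxE mul1r.
rewrite -(big_enum_val (fun y => ((y - s * enum_val j \in Q)%:R : int))).
rewrite -(@sum_sq_indicator_affine 1 (- (s * enum_val j))) ?oner_neq0 //.
by apply: eq_bigr => y _; rewrite mul1r.
Qed.

End CyclotomicMatrices.

Theorem mainTheorem8 (F : finFieldType) (gamma : F) (m : nat) (a b : F) :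
  (#|F|.-1).-primitive_root gamma ->
  (#|F| %% 4 = 3)%N ->
  #|F| = (2 * m + 1)%N ->
  a \in cycl_class gamma 1 2 -> b \in cycl_class gamma 1 2 ->
  a * b = 1 ->
  is_dsrg (block_mx (Cmat gamma 2 1) (Cmat gamma 2 a)
                    (Cmat gamma 2 b) (Cmat gamma 2 1))
          (2 * (2 * m + 1)) (2 * m) m m.-1 m.
Proof.
move=> gamma_prim _ card_F a_nonsq b_nonsq ab1.
have F_odd : odd #|F| by rewrite card_F addn1 /= oddM.
have m_gt0 : (0 < m)%N by have := finNzRing_gt1 F; rewrite card_F; lia.
have [a_neq0 b_neq0] := (cycl_class_neq0 gamma_prim a_nonsq,
                         cycl_class_neq0 gamma_prim b_nonsq).
have ba1 : b * a = 1 by rewrite mulrC.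
have a_inv : a^-1 = b by rewrite -[a^-1]mulr1 -ab1 mulKf.
have b_inv : b^-1 = a by rewrite -[b^-1]mulr1 -ba1 mulKf.
have sum_mm :
    const_mx m%:R + const_mx m%:R = const_mx (2 * m)%:R :> 'M[int]_#|F|.
  by rewrite mul2n -addnn natrD raddfD.
apply: is_dsrg_of_sqr => //.
- by rewrite card_F; lia.
- by apply: (block_mx_entry_prop (P := fun x => x = 0 \/ x = 1)) => *;
    apply: Cmat_entry01.
- by apply: (block_mx_diag_prop (P := eq^~ 0)) => *; apply: Cmat1_diag.
- rewrite mulmx_block -block_mx_const opp_block_mx add_block_mx.
  rewrite [Cmat _ _ b *m _ + _]addrC [Cmat _ _ b *m Cmat _ _ a + _]addrC.
  by rewrite !(Cmat_mul_addE gamma_prim F_odd card_F) ?a_inv ?b_inv ?mulr1.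
- rewrite -block_mx_const mulmx_block.
  rewrite !(Cmat_mul_const1 gamma_prim F_odd card_F) ?oner_neq0 //.
  by rewrite sum_mm block_mx_const.
- rewrite -block_mx_const mulmx_block.
  by rewrite !(const1_mul_Cmat gamma_prim F_odd card_F) sum_mm block_mx_const.
Qed.
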